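(* Let $\Phi_1,\dots,\Phi_N$ be quantum channels on $\mathcal L(\mathbb C^d)$ and $1\le K\le N$. For a subset $S\subseteq[N]$ with $|S|=K$ and orthonormal bases $\mathbf e=(\mathbf e^{(i)})_{i\in S}$ of $\mathbb C^d$, let $$\mathrm{val}(\mathbf\Phi,S,\mathbf e):=\min\{\operatorname{Tr}H:\ H \text{ Hermitian},\ H\ge G_{\Phi_i,\mathbf e^{(i)}}\ \forall i\in S\}.$$ If there exist at least one $K$-subset $S\subseteq[N]$ and bases $\mathbf e$ with $\mathrm{val}(\mathbf\Phi,S,\mathbf e)>d$, then $(\Phi_1,\dots,\Phi_N)$ is $(N,K)$-incompatible. If for every $K$-subset $S\subseteq[N]$ there exist bases $\mathbf e_S$ with $\mathrm{val}(\mathbf\Phi,S,\mathbf e_S)>d$, then $(\Phi_1,\dots,\Phi_N)$ is $(N,K)$-strong incompatible.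
   Context: A family of channels $(\Phi_i)_{i\in S}$ on $\mathcal L(\mathbb C^d)$ is compatible if there is a completely positive trace-preserving $\Lambda:\mathcal L(\mathbb C^d)\to\mathcal L((\mathbb C^d)^{\otimes |S|})$ whose marginal on the factor labelled $i$ is $\Phi_i$ for every $i\in S$. The $N$-tuple is $(N,K)$-incompatible if at least one $K$-subset of the channels is incompatible, and $(N,K)$-strong incompatible if all $K$-subsets are incompatible. For $X=\sum X_{ij}|i\rangle\langle j|$, $|X\rangle:=\sum X_{ij}|i\rangle\otimes|j\rangle$; for a channel $\Phi$ with Hilbert–Schmidt adjoint $\Phi^*$ and orthonormal basis $\mathbf e=(e_i)$, $G_{\Phi,\mathbf e}:=\sum_{i=1}^d |\Phi^*(|e_i\rangle\langle e_i|)\rangle\langle\Phi^*(|e_i\rangle\langle e_i|)|/\operatorname{Tr}\Phi^*(|e_i\rangle\langle e_i|)$ (zero-denominator terms omitted). *)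

From HB Require Import structures.
From mathcomp Require Import all_boot all_order all_algebra.
From mathcomp Require Import complex.
From mathcomp Require Import Rstruct.
From Stdlib Require Rdefinitions.
Set Implicit Arguments. Unset Strict Implicit. Unset Printing Implicit Defensive.
Import Order.TTheory GRing.Theory Num.Theory.
Local Open Scope ring_scope.

Notation C := (complex Rdefinitions.R).

(* Operators on a finite-dimensional Hilbert space C^B whose orthonormal basis
   is indexed by the finite type B, given by their matrix entries. *)
Definition opT (B : finType) := B -> B -> C.

Definition psdT (B : finType) (X : opT B) : Prop :=
  forall v : B -> C, 0 <= \sum_(i : B) \sum_(j : B) (v i)^* * X i j * v j.

Definition hermT (B : finType) (X : opT B) : Prop :=
  forall i j, X i j = (X j i)^*.

Definition trT (B : finType) (X : opT B) : C := \sum_(i : B) X i i.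

Definition lin_mapT (d : nat) (B : finType) (L : 'M[C]_d -> opT B) : Prop :=
  forall (a : C) (X Y : 'M[C]_d) i j, L (a *: X + Y) i j = a * L X i j + L Y i j.

Definition tp_mapT (d : nat) (B : finType) (L : 'M[C]_d -> opT B) : Prop :=
  forall X : 'M[C]_d, trT (L X) = \tr X.

(* complete positivity: L (x) id_n is positive for every n *)
Definition cp_mapT (d : nat) (B : finType) (L : 'M[C]_d -> opT B) : Prop :=
  forall (n : nat) (X : opT ('I_d * 'I_n)%type), psdT X ->
    psdT (fun p q : (B * 'I_n)%type =>
            L (\matrix_(a, b) X (a, p.2) (b, q.2)) p.1 q.1).

Definition cptpT (d : nat) (B : finType) (L : 'M[C]_d -> opT B) : Prop :=
  [/\ lin_mapT L, cp_mapT L & tp_mapT L].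

Definition channel (d : nat) (Phi : 'M[C]_d -> 'M[C]_d) : Prop :=
  cptpT (fun X => fun i j => Phi X i j).

(* Output space (C^d)^{(x)J}: basis indexed by {ffun J -> 'I_d}.
   Marginal on the factor labelled j0 = partial trace over all other factors. *)
Definition marginal (d : nat) (J : finType) (Y : opT {ffun J -> 'I_d}) (j0 : J)
  : 'M[C]_d :=
  \matrix_(a, b) \sum_(x : {ffun J -> 'I_d} | x j0 == a)
                 \sum_(y : {ffun J -> 'I_d} | (y j0 == b) &&
                        [forall j, (j != j0) ==> (x j == y j)]) Y x y.

Definition compatible (d : nat) (J : finType) (Phi : J -> 'M[C]_d -> 'M[C]_d)
  : Prop :=
  exists L : 'M[C]_d -> opT {ffun J -> 'I_d},
    cptpT L /\ forall (j : J) (X : 'M[C]_d), marginal (L X) j = Phi j X.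

Definition subfam (d N : nat) (Phi : 'I_N -> 'M[C]_d -> 'M[C]_d)
  (S : {set 'I_N}) : {i : 'I_N | i \in S} -> 'M[C]_d -> 'M[C]_d :=
  fun i => Phi (val i).
Arguments subfam {d N} Phi S.

Definition NK_incompatible (d N K : nat) (Phi : 'I_N -> 'M[C]_d -> 'M[C]_d)
  : Prop :=
  exists S : {set 'I_N}, #|S| = K /\ ~ compatible (subfam Phi S).

Definition NK_strong_incompatible (d N K : nat)
  (Phi : 'I_N -> 'M[C]_d -> 'M[C]_d) : Prop :=
  forall S : {set 'I_N}, #|S| = K -> ~ compatible (subfam Phi S).

(* Hilbert-Schmidt adjoint: Tr(Phi^*(Y)^dag X) = Tr(Y^dag Phi(X)), i.e.
   Phi^*(Y)_{ab} = sum_{x,y} Y_{xy} conj(Phi(E_{ab})_{xy}). *)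
Definition hs_adjoint (d : nat) (Phi : 'M[C]_d -> 'M[C]_d) (Y : 'M[C]_d)
  : 'M[C]_d :=
  \matrix_(a, b) \sum_(x < d) \sum_(y < d) Y x y * (Phi (delta_mx a b) x y)^*.

Definition onb (d : nat) (e : 'I_d -> 'cV[C]_d) : Prop :=
  forall i j : 'I_d, \sum_(k < d) ((e i) k 0)^* * (e j) k 0 = (i == j)%:R.

Definition proj (d : nat) (v : 'cV[C]_d) : 'M[C]_d :=
  \matrix_(a, b) (v a 0 * (v b 0)^*).

(* |X><X| on C^d (x) C^d, where |X> = sum_{ij} X_{ij} |i> (x) |j> *)
Definition vec_proj (d : nat) (X : 'M[C]_d) : opT ('I_d * 'I_d)%type :=
  fun p q => X p.1 p.2 * (X q.1 q.2)^*.

(* G_{Phi,e}, zero-denominator terms omitted *)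
Definition Gmat (d : nat) (Phi : 'M[C]_d -> 'M[C]_d) (e : 'I_d -> 'cV[C]_d)
  : opT ('I_d * 'I_d)%type :=
  fun p q => \sum_(i < d)
    let A := hs_adjoint Phi (proj (e i)) in
    if \tr A == 0 then 0 else vec_proj A p q / \tr A.

Definition feasible (d N : nat) (Phi : 'I_N -> 'M[C]_d -> 'M[C]_d)
  (S : {set 'I_N}) (e : 'I_N -> 'I_d -> 'cV[C]_d) (H : opT ('I_d * 'I_d)%type)
  : Prop :=
  hermT H /\ forall i, i \in S -> psdT (fun p q => H p q - Gmat (Phi i) (e i) p q).

Definition is_val (d N : nat) (Phi : 'I_N -> 'M[C]_d -> 'M[C]_d)
  (S : {set 'I_N}) (e : 'I_N -> 'I_d -> 'cV[C]_d) (v : C) : Prop :=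
  (exists H, feasible Phi S e H /\ trT H = v) /\
  (forall H, feasible Phi S e H -> v <= trT H).

From HB Require Import structures.
From mathcomp Require Import all_boot all_order all_algebra.
From mathcomp Require Import complex Rstruct.
From mathcomp Require Import ring.
Import Order.TTheory GRing.Theory Num.Theory.
Local Open Scope ring_scope.
Set Implicit Arguments. Unset Strict Implicit. Unset Printing Implicit Defensive.

(* Let L be a joint channel of (Phi_i)_(i in S) and e_x the product basis
   vectors built from the bases e^(i).  The operators A_x := L^*(|e_x><e_x|) are
   positive, and the marginal condition splits Phi_i^*(|e^(i)_a><e^(i)_a|) as the
   sum of the A_x with x_i = a.  As (A, t) |-> |A><A| / t is jointly convex (a
   Cauchy-Schwarz inequality), H := sum_x |A_x><A_x| / Tr A_x dominates every
   G_(Phi_i, e^(i)); and Tr H <= sum_x Tr A_x = Tr L^*(1) = d because L is trace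
   preserving.  Hence val <= d whenever the subfamily indexed by S is
   compatible. *)

Definition qform (B : finType) (X : opT B) (v : B -> C) : C :=
  \sum_i \sum_j (v i)^* * X i j * v j.

Lemma qformB (B : finType) (X Y : opT B) v :
  qform (fun p q => X p q - Y p q) v = qform X v - qform Y v.
Proof.
rewrite /qform -sumrB; apply: eq_bigr => i _; rewrite -sumrB.
by apply: eq_bigr => j _; rewrite mulrBr mulrBl.
Qed.

Lemma psdT_ext (B : finType) (X Y : opT B) :
  (forall p q, X p q = Y p q) -> psdT Y -> psdT X.
Proof.
move=> eXY psdY v; have := psdY v.
by under eq_bigr do under eq_bigr do rewrite -eXY.
Qed.

Section PsdEntries.
Variables (B : finType) (X : opT B).
Hypothesis psdX : psdT X.

Lemma qform_supp2 p q (a b : C) : p != q ->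
  qform X (fun k => if k == p then a else if k == q then b else 0) =
  a^* * X p p * a + a^* * X p q * b + b^* * X q p * a + b^* * X q q * b.
Proof.
move=> npq; have nqp : q != p by rewrite eq_sym.
set v := fun k => _.
have v0 k : k != p -> k != q -> v k = 0 by rewrite /v => /negPf-> /negPf->.
have sum2 (F : B -> C) : (forall k, k != p -> k != q -> F k = 0) ->
    \sum_k F k = F p + F q.
  move=> F0; rewrite (bigD1 p) //= (bigD1 q) //= big1 ?addr0 //.
  by move=> k /andP[kp kq]; apply: F0.
rewrite /qform sum2 => [|k kp kq]; last first.
  by rewrite v0 // rmorph0 big1 // => j _; rewrite !mul0r.
rewrite !sum2; try by move=> k kp kq; rewrite (v0 k) ?mulr0.
by rewrite /v eqxx (negPf nqp) eqxx; ring.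
Qed.

Lemma psdT_diag_ge0 p : 0 <= X p p.
Proof.
have := psdX (fun k => (k == p)%:R).
rewrite -/(qform X _) /qform (big_only1 p) // => [|k kp _]; last first.
  by rewrite (negPf kp) rmorph0 big1 // => j _; rewrite !mul0r.
rewrite (big_only1 p) // => [|k kp _]; last by rewrite (negPf kp) mulr0.
by rewrite eqxx rmorph1 mulr1 mul1r.
Qed.

Lemma psdT_conj p q : X q p = (X p q)^*.
Proof.
have [<-|npq] := eqVneq p q; first by rewrite geC0_conj ?psdT_diag_ge0.
have real_cross s : X p q * s + s^* * X q p \is Num.real.
  have := psdX (fun k => if k == p then 1 else if k == q then s else 0).
  rewrite -/(qform X _) qform_supp2 // rmorph1 !mul1r !mulr1 => /ger0_real.
  have -> : X p p + X p q * s + s^* * X q p + s^* * X q q * s =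
            X p p + X q q * (s * s^*) + (X p q * s + s^* * X q p) by ring.
  rewrite -normCK rpredDl // rpredD ?rpredM ?rpredX ?normr_real //;
    exact/ger0_real/psdT_diag_ge0.
move: (real_cross 1) (real_cross 'i) => /CrealP + /CrealP.
rewrite !rmorphD !rmorphM /= !conjCK conjCi rmorph1 !mulr1 !mul1r.
set c := X p q; set c' := X q p => E1 Ei.
have sqri : 'i * 'i = -1 :> C by rewrite -expr2 sqrCi.
apply: (@mulfI _ 2); first by rewrite pnatr_eq0.
apply/eqP; rewrite -subr_eq0; apply/eqP.
(* E1 + 'i * Ei, using 'i * 'i = -1 *)
have -> : 2 * c' - 2 * c^* =
    - ((c^* + c'^* - (c + c')) +
       'i * ((c^* * - 'i + 'i * c'^*) - (c * 'i + - 'i * c')))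
    - ('i * 'i + 1) * (c^* - c'^* + c - c') by ring.
by rewrite E1 Ei sqri addNr !subrr; ring.
Qed.

Lemma psdT_minor p q : X p q * (X p q)^* <= X p p * X q q.
Proof.
have [<-|npq] := eqVneq p q; first by rewrite -psdT_conj.
have a0 := psdT_diag_ge0 p; have b0 := psdT_diag_ge0 q.
have conjX := psdT_conj p q.
set a := X p p in a0 *; set b := X q q in b0 *; set c := X p q in conjX *.
have n0 : 0 <= c * c^* := mul_conjC_ge0 c.
set n := c * c^* in n0 *.
have [a_eq0|a_neq0] := eqVneq a 0.
  have := psdX (fun k =>
    if k == p then - c * (b + 1) else if k == q then n else 0).
  rewrite -/(qform X _) qform_supp2 // -/a -/b -/c conjX a_eq0 (geC0_conj n0).
  rewrite !rmorphM rmorphN rmorphD rmorph1 /= (geC0_conj b0).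
  have -> : - c^* * (b + 1) * 0 * (- c * (b + 1)) + - c^* * (b + 1) * c * n +
     n * c^* * (- c * (b + 1)) + n * b * n = - ((b + 2) * (n * n)).
    by rewrite /n; ring.
  rewrite oppr_ge0 pmulr_rle0 ?(le_lt_trans b0) ?ltrDl ?ltr0n // => nn_le0.
  have /eqP : n * n = 0 by apply/eqP; rewrite eq_le nn_le0 mulr_ge0.
  by rewrite mulf_eq0 orbb => /eqP->; rewrite mul0r.
have := psdX (fun k => if k == p then - c else if k == q then a else 0).
rewrite -/(qform X _) qform_supp2 // -/a -/b -/c conjX (geC0_conj a0) rmorphN.
have -> : - c^* * a * - c + - c^* * c * a + a * c^* * - c + a * b * a =
   a * (a * b - n) by rewrite /n; ring.
by rewrite pmulr_rge0 ?subr_ge0 // lt_def a_neq0.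
Qed.
End PsdEntries.

Section PsdMatrix.
Variables (d : nat) (A : 'M[C]_d).
Hypothesis psdA : psdT A.

Lemma psdT_mxtrace_ge0 : 0 <= \tr A.
Proof. by apply: sumr_ge0 => i _; apply: psdT_diag_ge0. Qed.

Lemma psdT_sum_sqr_le_mxtrace :
  \sum_i \sum_j A i j * (A i j)^* <= \tr A * \tr A.
Proof.
rewrite mulr_suml; apply: ler_sum => i _; rewrite mulr_sumr.
by apply: ler_sum => j _; apply: psdT_minor.
Qed.

Lemma psdT_mxtrace_eq0 : \tr A = 0 -> A = 0.
Proof.
move/eqP; rewrite psumr_eq0 => [/allP diag0|i _]; last exact: psdT_diag_ge0.
have {}diag0 i : A i i = 0 by apply/eqP/diag0; rewrite mem_index_enum.
apply/matrixP => i j; rewrite mxE; apply/eqP.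
rewrite -mul_conjC_eq0 eq_le mul_conjC_ge0 andbT.
by have := psdT_minor psdA i j; rewrite !diag0 mul0r.
Qed.
End PsdMatrix.

Definition sqdiv (c t : C) : C := if t == 0 then 0 else c * c^* / t.

Lemma sqdiv_ge0 c t : 0 <= t -> 0 <= sqdiv c t.
Proof.
by move=> t0; rewrite /sqdiv; case: eqP => // _; rewrite divr_ge0 ?mul_conjC_ge0.
Qed.

Lemma sqdiv_sum_le (I : finType) (P : pred I) (c t : I -> C) :
  (forall i, P i -> 0 <= t i) -> (forall i, P i -> t i = 0 -> c i = 0) ->
  sqdiv (\sum_(i | P i) c i) (\sum_(i | P i) t i) <=
  \sum_(i | P i) sqdiv (c i) (t i).
Proof.
move=> t_ge0 c0.
set T := \sum_(i | P i) t i; set S := \sum_(i | P i) c i.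
rewrite {1}/sqdiv; case: eqP => [_|/eqP T_neq0].
  by apply: sumr_ge0 => i Pi; apply/sqdiv_ge0/t_ge0.
have conjT : T^* = T by apply/geC0_conj/sumr_ge0.
(* Completing the square: the i-th defect is t_i |c_i / t_i - S / T|^2. *)
pose defect i := sqdiv (c i) (t i) - c i * (S^* / T) - (c i)^* * (S / T)
                 + t i * (S * S^* / (T * T)).
have -> : \sum_(i | P i) sqdiv (c i) (t i) =
          S * S^* / T + \sum_(i | P i) defect i.
  rewrite big_split /= !sumrB -!mulr_suml -/S -/T -rmorph_sum /= -/S.
  by field.
rewrite lerDl; apply: sumr_ge0 => i Pi; rewrite /defect /sqdiv.
have [ti0|ti_neq0] := eqVneq (t i) 0.
  by rewrite ti0 (c0 i Pi ti0) rmorph0 !mul0r !subr0 addr0.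
have -> : c i * (c i)^* / t i - c i * (S^* / T) - (c i)^* * (S / T) +
          t i * (S * S^* / (T * T)) =
          t i * ((c i / t i - S / T) * (c i / t i - S / T)^*).
  rewrite rmorphB /= !rmorphM /= !fmorphV /= conjT (geC0_conj (t_ge0 i Pi)).
  by field; rewrite T_neq0 ti_neq0.
by rewrite mulr_ge0 ?t_ge0 ?mul_conjC_ge0.
Qed.

Definition vdot d (A : 'M[C]_d) (u : ('I_d * 'I_d)%type -> C) : C :=
  \sum_p (u p)^* * A p.1 p.2.

Lemma vdot_sum d (I : finType) (P : pred I) (A : I -> 'M[C]_d) u :
  vdot (\sum_(x | P x) A x) u = \sum_(x | P x) vdot (A x) u.
Proof.
rewrite /vdot; under eq_bigr do rewrite summxE mulr_sumr.
by rewrite exchange_big.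
Qed.

Definition Gfam d (I : finType) (A : I -> 'M[C]_d) : opT ('I_d * 'I_d)%type :=
  fun p q => \sum_x
    (if \tr (A x) == 0 then 0 else vec_proj (A x) p q / \tr (A x)).

Lemma qform_Gfam d (I : finType) (A : I -> 'M[C]_d) u :
  qform (Gfam A) u = \sum_x sqdiv (vdot (A x) u) (\tr (A x)).
Proof.
rewrite /qform /Gfam.
under eq_bigr do under eq_bigr do rewrite mulr_sumr mulr_suml.
under eq_bigr do rewrite exchange_big.
rewrite exchange_big; apply: eq_bigr => x _; rewrite /sqdiv /vdot.
case: eqP => [_|/eqP tr_neq0].
  by rewrite big1 // => p _; rewrite big1 // => q _; rewrite mulr0 mul0r.
rewrite rmorph_sum !mulr_suml; apply: eq_bigr => p _.
rewrite mulr_sumr mulr_suml; apply: eq_bigr => q _.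
by rewrite /vec_proj rmorphM /= conjCK; field.
Qed.

Section Gfam.
Variables (d : nat) (I : finType) (A : I -> 'M[C]_d).
Hypothesis psdA : forall x, psdT (A x).

Lemma Gfam_herm : hermT (Gfam A).
Proof.
move=> p q; rewrite /Gfam rmorph_sum; apply: eq_bigr => x _.
case: eqP => _; first by rewrite rmorph0.
have trA_ge0 := psdT_mxtrace_ge0 (psdA x).
rewrite /vec_proj !rmorphM fmorphV /= conjCK (geC0_conj trA_ge0).
by rewrite [_ * _^*]mulrC.
Qed.

Lemma Gfam_trace_le : trT (Gfam A) <= \sum_x \tr (A x).
Proof.
rewrite /trT /Gfam exchange_big /=; apply: ler_sum => x _.
have trA_ge0 := psdT_mxtrace_ge0 (psdA x).
case: eqP => [_|/eqP tr_neq0]; first by rewrite big1.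
rewrite -mulr_suml ler_pdivrMr ?lt_def ?tr_neq0 //.
rewrite -(pair_bigA _ (fun i j => A x i j * (A x i j)^*)).
exact: psdT_sum_sqr_le_mxtrace.
Qed.

Lemma Gfam_coarsen_psd (K : finType) (f : I -> K) :
  psdT (fun p q => Gfam A p q - Gfam (fun k => \sum_(x | f x == k) A x) p q).
Proof.
move=> u; rewrite -/(qform _ u) qformB subr_ge0 !qform_Gfam.
rewrite (partition_big f xpredT) //=; apply: ler_sum => k _.
rewrite raddf_sum vdot_sum; apply: sqdiv_sum_le => x _.
  exact: psdT_mxtrace_ge0.
move/(psdT_mxtrace_eq0 (psdA x)) => ->.
by rewrite /vdot big1 // => p _; rewrite mxE mulr0.
Qed.
End Gfam.

Lemma psdT_rank1 (B : finType) (v : B -> C) : psdT (fun p q => v p * (v q)^*).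
Proof.
move=> u; rewrite -/(qform _ u).
have -> : qform (fun p q => v p * (v q)^*) u =
          (\sum_p (u p)^* * v p) * (\sum_p (u p)^* * v p)^*.
  rewrite rmorph_sum mulr_suml; apply: eq_bigr => p _.
  rewrite mulr_sumr; apply: eq_bigr => q _.
  by rewrite rmorphM /= conjCK; ring.
exact: mul_conjC_ge0.
Qed.

Lemma psdT_pair_ord1 (B : finType) (Y : opT B) :
  psdT (fun p q : (B * 'I_1)%type => Y p.1 q.1) -> psdT Y.
Proof.
move=> psdY u; have := psdY (fun p => u p.1).
have sum_pair (F : B * 'I_1 -> C) : \sum_p F p = \sum_y F (y, ord0).
  rewrite (eq_bigr (fun p => F (p.1, p.2))) => [|[] //].
  rewrite -(pair_bigA _ (fun y k => F (y, k))).
  by apply: eq_bigr => y _; rewrite big_ord1.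
by under eq_bigr do rewrite sum_pair; rewrite sum_pair.
Qed.

Section LinearMap.
Variables (d : nat) (B : finType) (L : 'M[C]_d -> opT B).
Hypothesis linL : lin_mapT L.

Lemma lin_mapT0 y z : L 0 y z = 0.
Proof.
have := linL 1 0 0 y z; rewrite scale1r addr0 mul1r => /eqP.
by rewrite addrC -subr_eq subrr eq_sym => /eqP.
Qed.

Lemma lin_mapT_sum (I : finType) (P : pred I) (F : I -> 'M[C]_d) y z :
  L (\sum_(x | P x) F x) y z = \sum_(x | P x) L (F x) y z.
Proof.
apply: (big_rec2 (fun X s => L X y z = s)) => [|x X s _ <-].
  exact: lin_mapT0.
by have := linL 1 (F x) X y z; rewrite scale1r mul1r.
Qed.

Lemma lin_mapT_delta X y z :
  L X y z = \sum_a \sum_b X a b * L (delta_mx a b) y z.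
Proof.
rewrite {1}(matrix_sum_delta X) lin_mapT_sum; apply: eq_bigr => a _.
rewrite lin_mapT_sum; apply: eq_bigr => b _.
by have := linL (X a b) (delta_mx a b) 0 y z; rewrite !addr0 lin_mapT0 addr0.
Qed.
End LinearMap.

(* [adj_proj L w] is [L^*(|w><w|)], with [L^*] the Hilbert-Schmidt adjoint as in
   [hs_adjoint]. *)
Definition adj_proj d (B : finType) (L : 'M[C]_d -> opT B) (w : B -> C)
  : 'M[C]_d :=
  \matrix_(a, b) \sum_y \sum_z w y * (w z)^* * (L (delta_mx a b) y z)^*.

Lemma exchange_big22 (I J K L : finType) (F : I -> J -> K -> L -> C) :
  \sum_i \sum_j \sum_k \sum_l F i j k l = \sum_k \sum_l \sum_i \sum_j F i j k l.
Proof.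
under eq_bigr do rewrite exchange_big; rewrite exchange_big.
apply: eq_bigr => k _; under eq_bigr do rewrite exchange_big.
by rewrite exchange_big.
Qed.

Lemma qform_adj_proj d (B : finType) (L : 'M[C]_d -> opT B) w v :
  lin_mapT L ->
  qform (adj_proj L w) v = (qform (L (\matrix_(a, b) (v a * (v b)^*))) w)^*.
Proof.
move=> linL; rewrite /qform.
transitivity (\sum_a \sum_b \sum_y \sum_z
    (v a)^* * v b * w y * (w z)^* * (L (delta_mx a b) y z)^*).
  apply: eq_bigr => a _; apply: eq_bigr => b _.
  rewrite mxE mulr_sumr mulr_suml; apply: eq_bigr => y _.
  by rewrite mulr_sumr mulr_suml; apply: eq_bigr => z _; ring.
rewrite exchange_big22 rmorph_sum; apply: eq_bigr => y _.
rewrite rmorph_sum; apply: eq_bigr => z _.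
rewrite lin_mapT_delta // !rmorphM /= conjCK rmorph_sum mulr_sumr mulr_suml.
apply: eq_bigr => a _; rewrite rmorph_sum mulr_sumr mulr_suml.
by apply: eq_bigr => b _; rewrite !mxE !rmorphM /= conjCK; ring.
Qed.

Lemma adj_proj_psd d (B : finType) (L : 'M[C]_d -> opT B) w :
  lin_mapT L -> cp_mapT L -> psdT (adj_proj L w).
Proof.
move=> linL cpL v; rewrite -/(qform _ v) qform_adj_proj // conjC_ge0.
apply: psdT_pair_ord1 w.
have := cpL 1%N _ (psdT_rank1 (fun p : ('I_d * 'I_1)%type => v p.1)).
by apply: psdT_ext => p q /=; congr (L _ _ _); apply/matrixP => a b; rewrite !mxE.
Qed.

Lemma onb_complete d (e : 'I_d -> 'cV[C]_d) : onb e ->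
  forall u v, \sum_c e c u 0 * (e c v 0)^* = (u == v)%:R.
Proof.
move=> onb_e u v.
pose M : 'M[C]_d := \matrix_(k, i) e i k 0.
pose Mc : 'M[C]_d := \matrix_(i, k) (e i k 0)^*.
have McM : Mc *m M = 1%:M.
  apply/matrixP => i j; rewrite !mxE -onb_e.
  by apply: eq_bigr => k _; rewrite !mxE.
have /matrixP/(_ u v) := mulmx1C McM; rewrite !mxE => <-.
by apply: eq_bigr => c _; rewrite !mxE.
Qed.

Lemma sum_fibers (T K : finType) (f : T -> K) (G : K -> T -> C) :
  \sum_k \sum_(t | f t == k) G k t = \sum_t G (f t) t.
Proof.
rewrite (partition_big f xpredT) //=; apply: eq_bigr => k _.
by apply: eq_big => [t|t /eqP->].
Qed.

Lemma prod_boolr (J : finType) (P : pred J) (b : J -> bool) :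
  \prod_(j | P j) ((b j)%:R : C) = [forall j, P j ==> b j]%:R.
Proof.
case: forallP => [allb|/forallP].
  by rewrite big1 // => j Pj; rewrite (implyP (allb j) Pj).
rewrite negb_forall => /existsP[j]; rewrite negb_imply => /andP[Pj /negPf bj].
by rewrite (bigD1 j) //= bj mul0r.
Qed.

(* Coordinate [y] of the product basis vector [e_(x 1) (x) ... (x) e_(x n)]. *)
Definition tensor_vec d (J : finType) (e : J -> 'I_d -> 'cV[C]_d)
  (x y : {ffun J -> 'I_d}) : C :=
  \prod_j e j (x j) (y j) 0.

Section TensorBasis.
Variables (d : nat) (J : finType) (e : J -> 'I_d -> 'cV[C]_d).
Hypothesis onb_e : forall j, onb (e j).

Lemma sum_tensor_proj_fixed j0 a y z :
  \sum_(x : {ffun J -> 'I_d} | x j0 == a)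
    tensor_vec e x y * (tensor_vec e x z)^* =
  [forall j, (j != j0) ==> (y j == z j)]%:R *
    (e j0 a (y j0) 0 * (e j0 a (z j0) 0)^*).
Proof.
pose Q j (c : 'I_d) := (j == j0) ==> (c == a).
pose f j (c : 'I_d) := e j c (y j) 0 * (e j c (z j) 0)^*.
transitivity (\sum_(x in family Q) \prod_j f j (x j)).
  apply: eq_big => [x|x _]; last by rewrite rmorph_prod -big_split.
  apply/idP/familyP => [/eqP xa j|Qx].
    by rewrite unfold_in /Q; case: eqP => //= ->; rewrite xa.
  by have := Qx j0; rewrite unfold_in /Q eqxx.
rewrite -bigA_distr_big_dep (bigD1 j0) //= mulrC (big_pred1 a); last first.
  by move=> c; rewrite /Q eqxx.
congr (_ * _); rewrite -prod_boolr; apply: eq_bigr => j /negPf j_neq0.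
by rewrite /Q j_neq0 onb_complete.
Qed.

Lemma sum_tensor_proj y z :
  \sum_x tensor_vec e x y * (tensor_vec e x z)^* = (y == z)%:R.
Proof.
transitivity (\prod_j \sum_c e j c (y j) 0 * (e j c (z j) 0)^*).
  rewrite bigA_distr_bigA; apply: eq_bigr => x _.
  by rewrite /tensor_vec rmorph_prod -big_split.
under eq_bigr do rewrite onb_complete //.
rewrite prod_boolr; congr (nat_of_bool _)%:R; apply/idP/eqP => [/forallP yz|->].
  by apply/ffunP => j; apply/eqP/(implyP (yz j)).
by apply/forallP => j; rewrite eqxx.
Qed.
End TensorBasis.

Lemma hs_adjoint_marginal d (J : finType) (L : 'M[C]_d -> opT {ffun J -> 'I_d})
    j0 (Phi : 'M[C]_d -> 'M[C]_d) (M : 'M[C]_d) :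
  (forall X, marginal (L X) j0 = Phi X) ->
  hs_adjoint Phi M =
  \matrix_(a, b) \sum_(y : {ffun J -> 'I_d}) \sum_(z : {ffun J -> 'I_d})
    [forall j, (j != j0) ==> (y j == z j)]%:R * M (y j0) (z j0) *
    (L (delta_mx a b) y z)^*.
Proof.
move=> margL; apply/matrixP => a b; rewrite !mxE.
under eq_bigr do under eq_bigr do rewrite -margL mxE rmorph_sum mulr_sumr.
under eq_bigr do rewrite exchange_big /=.
rewrite sum_fibers; apply: eq_bigr => y _.
under eq_bigr do rewrite rmorph_sum mulr_sumr big_mkcondr /=.
rewrite sum_fibers; apply: eq_bigr => z _.
by case: [forall _, _]; rewrite ?mul1r ?mul0r.
Qed.

Lemma hs_adjoint_marginal_proj d (J : finType)
    (L : 'M[C]_d -> opT {ffun J -> 'I_d}) (e : J -> 'I_d -> 'cV[C]_d) j0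
    (Phi : 'M[C]_d -> 'M[C]_d) a :
  (forall j, onb (e j)) -> (forall X, marginal (L X) j0 = Phi X) ->
  hs_adjoint Phi (proj (e j0 a)) =
  \sum_(x : {ffun J -> 'I_d} | x j0 == a) adj_proj L (tensor_vec e x).
Proof.
move=> onb_e margL; rewrite (hs_adjoint_marginal _ margL).
apply/matrixP => a' b'; rewrite !mxE summxE; under [RHS]eq_bigr do rewrite mxE.
rewrite [RHS]exchange_big; apply: eq_bigr => y _; rewrite [RHS]exchange_big.
apply: eq_bigr => z _; rewrite -mulr_suml sum_tensor_proj_fixed //.
by rewrite !mxE mulrA.
Qed.

Lemma sum_mxtrace_adj_proj d (B I : finType) (L : 'M[C]_d -> opT B)
    (w : I -> B -> C) :
  tp_mapT L -> (forall y z, \sum_x w x y * (w x z)^* = (y == z)%:R) ->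
  \sum_x \tr (adj_proj L (w x)) = d%:R.
Proof.
move=> tpL w_orth; rewrite exchange_big -[RHS]mxtrace1; apply: eq_bigr => a _.
under eq_bigr do rewrite mxE.
rewrite exchange_big; under eq_bigr do rewrite exchange_big.
transitivity (\sum_y (L (delta_mx a a) y y)^*).
  apply: eq_bigr => y _; rewrite (big_only1 y) // => [|z /negPf zy _].
    by rewrite -mulr_suml w_orth eqxx mul1r.
  by rewrite -mulr_suml w_orth eq_sym zy mul0r.
rewrite -rmorph_sum [\sum_y _]tpL /mxtrace (big_only1 a) // => [|b /negPf ba _].
  by rewrite !mxE !eqxx rmorph1.
by rewrite mxE ba.
Qed.

Lemma compatible_val_le d N (Phi : 'I_N -> 'M[C]_d -> 'M[C]_d) (S : {set 'I_N})
    (e : 'I_N -> 'I_d -> 'cV[C]_d) (v : C) :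
  compatible (subfam Phi S) -> (forall i, i \in S -> onb (e i)) ->
  is_val Phi S e v -> v <= d%:R.
Proof.
move=> [L [[linL cpL tpL] margL]] onb_e [_ val_min].
pose eS (j : {i | i \in S}) := e (val j).
have onb_eS j : onb (eS j) by apply/onb_e/valP.
pose A x := adj_proj L (tensor_vec eS x).
have psdA x : psdT (A x) by apply: adj_proj_psd.
have feasH : feasible Phi S e (Gfam A).
  split=> [|i Si]; first exact: Gfam_herm.
  pose j : {i | i \in S} := exist _ i Si.
  apply: psdT_ext (Gfam_coarsen_psd psdA (fun x => x j)) => p q.
  (* [Gmat Phi e] is [Gfam] of the family [Phi^*(|e_a><e_a|)] *)
  congr (_ - _); apply: eq_bigr => a _.
  by rewrite (hs_adjoint_marginal_proj a onb_eS (margL j)).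
apply: le_trans (val_min _ feasH) _; apply: le_trans (Gfam_trace_le psdA) _.
by rewrite sum_mxtrace_adj_proj // => y z; apply: sum_tensor_proj.
Qed.

Unset Implicit Arguments.

Theorem theorem6p2 (d N K : nat) (Phi : 'I_N -> 'M[C]_d -> 'M[C]_d) :
  (forall i, channel (Phi i)) -> (1 <= K <= N)%N ->
  ((exists (S : {set 'I_N}) (e : 'I_N -> 'I_d -> 'cV[C]_d) (v : C),
      [/\ #|S| = K, (forall i, i \in S -> onb (e i)),
          is_val Phi S e v & d%:R < v]) ->
     NK_incompatible K Phi) /\
  ((forall S : {set 'I_N}, #|S| = K ->
      exists (e : 'I_N -> 'I_d -> 'cV[C]_d) (v : C),
        [/\ (forall i, i \in S -> onb (e i)), is_val Phi S e v & d%:R < v]) ->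
     NK_strong_incompatible K Phi).
Proof.
move=> _ _; split.
  move=> [S [e [v [cardS onb_e val_v lt_dv]]]]; exists S; split=> // compS.
  by move: (compatible_val_le compS onb_e val_v); rewrite (lt_geF lt_dv).
move=> val_gt S cardS compS; have [e [v [onb_e val_v lt_dv]]] := val_gt S cardS.
by move: (compatible_val_le compS onb_e val_v); rewrite (lt_geF lt_dv).
Qed.
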